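(* For a threshold graph $G$ and an integer $d\ge0$, $\mathrm{degen}(G)\ge d$ if and only if $G$ contains a subgraph isomorphic to $K_{d+1}$.
   Context: A threshold graph on $n\ge1$ vertices is built from a base vertex $v_0$ by successively adding $v_1,\dots,v_{n-1}$, each either isolated (adjacent to no earlier vertex) or dominating (adjacent to all earlier vertices). The degeneracy of a graph $G$ is $\mathrm{degen}(G)=\max_{H}\min_{v\in V(H)}\deg_H(v)$, the maximum over nonempty induced subgraphs $H$ of $G$ of the minimum degree of $H$; equivalently, the largest $k$ such that the $k$-core of $G$ (the maximal induced subgraph of minimum degree at least $k$) is nonempty. *)

From mathcomp Require Import all_boot.
Set Implicit Arguments. Unset Strict Implicit. Unset Printing Implicit Defensive.

(* Threshold construction on vertices 'I_n (vertex i is v_i): the vertex v_j,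
   j >= 1, is dominating iff b j = true (then adjacent to all earlier vertices),
   isolated otherwise.  The value b 0 (base vertex) is irrelevant. *)
Definition thr_adj n (b : 'I_n -> bool) (i j : 'I_n) : bool :=
  (i != j) && b (if i < j then j else i).

Definition is_threshold (T : finType) (e : rel T) : Prop :=
  exists n : nat, exists b : 'I_n -> bool, exists f : 'I_n -> T,
    [/\ 0 < n, bijective f & forall i j, e (f i) (f j) = thr_adj b i j].

Definition deg_in (T : finType) (e : rel T) (H : {set T}) (v : T) : nat :=
  #|[set u in H | e v u]|.

Definition mindeg (T : finType) (e : rel T) (H : {set T}) : nat :=
  \big[minn/#|T|]_(v in H) deg_in e H v.

Definition degen (T : finType) (e : rel T) : nat :=
  \max_(H : {set T} | H != set0) mindeg e H.

Definition has_clique (T : finType) (e : rel T) (k : nat) : Prop :=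
  exists f : 'I_k -> T, injective f /\ forall i j, i != j -> e (f i) (f j).

From mathcomp Require Import all_boot.

(* In a threshold graph, the neighbours of the earliest vertex s of an induced
   subgraph H all come later than s, so each of them is dominating; any two
   dominating vertices are adjacent, hence s together with its neighbourhood in
   H is a clique on deg_H(s) + 1 >= mindeg(H) + 1 vertices.  Taking H with
   maximal minimum degree gives the forward direction; conversely every vertex
   of a clique K has degree |K| - 1 inside K. *)

Set Implicit Arguments.
Unset Strict Implicit.
Unset Printing Implicit Defensive.

Section Degeneracy.
Variables (T : finType) (e : rel T).

Definition clique (K : {set T}) : Prop := {in K &, forall x y, x != y -> e x y}.

Lemma has_cliqueP k : has_clique e k <-> exists2 K, clique K & k <= #|K|.
Proof.
split=> [[f [f_inj f_adj]] | [K cK kK]].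
  exists (f @: [set: 'I_k]); last by rewrite card_imset // cardsT card_ord.
  move=> _ _ /imsetP[i _ ->] /imsetP[j _ ->] fij.
  by apply: f_adj; apply: contraNneq fij => ->.
pose f (i : 'I_k) := enum_val (widen_ord kK i).
have f_inj : injective f by move=> i j /enum_val_inj /(congr1 val) /= /val_inj.
exists f; split=> // i j ij; apply: cK; rewrite ?enum_valP ?(inj_eq f_inj) //.
Qed.

Lemma mindeg_leq_deg (H : {set T}) v : v \in H -> mindeg e H <= deg_in e H v.
Proof.
move=> Hv; rewrite /mindeg; elim: (index_enum T) (mem_index_enum v) => //= u r IH.
rewrite inE big_cons => /predU1P[<- | vr]; first by rewrite Hv geq_minl.
by case: ifP => _; rewrite ?(leq_trans (geq_minr _ _)) ?IH.
Qed.

Lemma leq_mindeg (H : {set T}) d :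
  {in H, forall v, d <= deg_in e H v} -> d <= #|T| -> d <= mindeg e H.
Proof.
move=> degH dT; rewrite /mindeg; elim/big_ind: _ => // x y dx dy.
by rewrite leq_min dx dy.
Qed.

Lemma leq_degen (H : {set T}) : H != set0 -> mindeg e H <= degen e.
Proof. exact: (@leq_bigmax_cond _ _ (mindeg e) H). Qed.

Lemma degen_attained (x : T) : exists2 H : {set T}, H != set0 & degen e = mindeg e H.
Proof.
have : 0 < #|[pred H : {set T} | H != set0]|.
  by apply/card_gt0P; exists setT; apply/set0Pn; exists x.
by case/(eq_bigmax_cond (mindeg e)) => H; exists H.
Qed.

Lemma clique_mindeg (K : {set T}) : clique K -> #|K|.-1 <= mindeg e K.
Proof.
move=> cK; apply: leq_mindeg; last exact: leq_trans (leq_pred _) (max_card _).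
move=> v Kv; rewrite (cardsD1 v K) Kv /=.
apply: subset_leq_card; apply/subsetP => u; rewrite !inE => /andP[uv Ku].
by rewrite Ku cK // eq_sym.
Qed.

Lemma has_clique_leq_degen d : has_clique e d.+1 -> d <= degen e.
Proof.
case/has_cliqueP => K cK dK.
have K0 : K != set0 by rewrite -card_gt0 (leq_trans _ dK).
apply: leq_trans (leq_degen K0); apply: leq_trans (clique_mindeg cK).
by move: dK; case: #|K|.
Qed.

End Degeneracy.

Lemma thr_adjC n (b : 'I_n -> bool) : symmetric (thr_adj b).
Proof.
move=> i j; rewrite /thr_adj eq_sym; case: (eqVneq i j) => //= /negbTE ij.
by case: ltngtP => // /val_inj eij; rewrite eij eqxx in ij.
Qed.

Lemma thr_adj_ltn n (b : 'I_n -> bool) (i j : 'I_n) : i < j -> thr_adj b i j = b j.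
Proof. by move=> ij; rewrite /thr_adj ij -val_eqE /= (ltn_eqF ij). Qed.

Lemma thr_adj_dominating n (b : 'I_n -> bool) (i j : 'I_n) :
  i != j -> b i -> b j -> thr_adj b i j.
Proof. by move=> ij bi bj; rewrite /thr_adj ij; case: ifP. Qed.

Section ThresholdClique.
Variables (T : finType) (e : rel T) (n : nat) (b : 'I_n -> bool) (g : T -> 'I_n).
Hypotheses (g_inj : injective g) (eE : forall x y, e x y = thr_adj b (g x) (g y)).

Lemma threshold_mindeg_clique (H : {set T}) :
  H != set0 -> exists2 K, clique e K & mindeg e H < #|K|.
Proof.
case/set0Pn => x0 Hx0; have [s Hs s_first] := arg_minnP (fun x => val (g x)) Hx0.
pose N := [set u in H | e s u].
have N_dominating u : u \in N -> b (g u).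
  rewrite inE eE => /andP[Hu su].
  have lt_su : g s < g u by rewrite ltn_neqAle val_eqE s_first // andbT; case/andP: su.
  by rewrite -(thr_adj_ltn b lt_su).
exists (s |: N).
  move=> x y /setU1P[->|Nx] /setU1P[->|Ny]; rewrite ?eqxx // => xy.
  - by move: Ny; rewrite inE => /andP[].
  - by move: Nx; rewrite inE eE thr_adjC -eE => /andP[].
  - by rewrite eE thr_adj_dominating ?(inj_eq g_inj) ?N_dominating.
have sN : s \notin N by rewrite inE eE /thr_adj eqxx andbF.
by rewrite cardsU1 sN ltnS mindeg_leq_deg.
Qed.

End ThresholdClique.

Theorem mainTheorem11 (T : finType) (e : rel T) (d : nat) :
  is_threshold e -> (d <= degen e)%N <-> has_clique e d.+1.
Proof.
case=> n [b [f [n_gt0 [g fK gK] efE]]].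
have eE x y : e x y = thr_adj b (g x) (g y) by rewrite -efE !gK.
split=> [d_degen | /has_clique_leq_degen //].
have [H H0 degenE] := degen_attained e (f (Ordinal n_gt0)).
have [K cK HK] := threshold_mindeg_clique (can_inj gK) eE H0.
by apply/has_cliqueP; exists K; rewrite // (leq_trans _ HK) // ltnS -degenE.
Qed.
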